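(* For any projection algebra $P$ there is a unique (up to isomorphism) projection-generated fundamental DRC-semigroup with projection algebra (isomorphic to) $P$, namely $\mathbb M(P)\cong\mathbb F(P)/\mu_{\mathbb F(P)}$.
   Context: Maps are written on the right and composed left to right. A projection algebra is a set $P$ with maps $\theta_p,\delta_p:P\to P$ ($p\in P$) such that for all $p,q$: $p\theta_p=p$, $p\delta_p=p$; $p\theta_{q\theta_p}=q\theta_p$, $p\delta_{q\delta_p}=q\delta_p$; $\theta_q\theta_{q\theta_p}=\theta_q\theta_p$, $\delta_q\delta_{q\delta_p}=\delta_q\delta_p$; $\theta_p\delta_p=\theta_p$, $\delta_p\theta_p=\delta_p$; $\theta_{p\delta_q}\theta_p=\theta_q\theta_p$, $\delta_{p\theta_q}\delta_p=\delta_q\delta_p$. Write $p\,\mathscr F\,q$ iff $p=q\delta_p$ and $q=p\theta_q$. A DRC-semigroup is $(S,\cdot,D,R)$, $(S,\cdot)$ a semigroup, $D,R:S\to S$ with, for all $a,b$: $D(a)a=a$, $aR(a)=a$; $D(ab)=D(aD(b))$, $R(ab)=R(R(a)b)$; $D(ab)=D(a)D(ab)D(a)$, $R(ab)=R(b)R(ab)R(b)$; $R(D(a))=D(a)$, $D(R(a))=R(a)$. Its projections $\mathbf P(S)=\{D(a):a\in S\}$ form a projection algebra with $q\theta_p=R(qp)$, $q\delta_p=D(pq)$; $S$ is projection-generated if generated as a semigroup by $\mathbf P(S)$. A congruence on $S$ is a semigroup congruence $\sigma$ with $a\,\sigma\,b\Rightarrow D(a)\,\sigma\,D(b)$ and $R(a)\,\sigma\,R(b)$;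 it is projection-separating if $p\,\sigma\,q\Rightarrow p=q$ for projections. $\mu_S$ denotes the maximum projection-separating congruence, and $S$ is fundamental if $\mu_S$ is equality. $\mathbb F(P)$ is the semigroup presented by generators $x_p$ ($p\in P$) and relations $x_p^2=x_p$, $x_px_q=x_px_{p\theta_q}$, $x_px_q=x_{q\delta_p}x_q$; every element equals $\overline{x_{p_1}\cdots x_{p_k}}$ for some $p_1\mathscr F\cdots\mathscr F p_k$ (with $p_1,p_k$ determined by the element), and with $D(\overline{x_{p_1}\cdots x_{p_k}})=\overline{x_{p_1}}$, $R(\overline{x_{p_1}\cdots x_{p_k}})=\overline{x_{p_k}}$ it is a DRC-semigroup. $\mathbb M(P)$ is the subsemigroup of $\mathcal T_P\times\mathcal T_P^{\mathrm{op}}$ (product $(\alpha,\alpha')(\beta,\beta')=(\alpha\beta,\beta'\alpha')$, $\mathcal T_P$ the full transformation semigroup on $P$) generated by the pairs $\hat p=(\theta_p,\delta_p)$, $p\in P$, with $D(\hat p_1\cdots\hat p_k)=\hat p_1$, $R(\hat p_1\cdots\hat p_k)=\hat p_k$ whenever $p_1\mathscr F\cdots\mathscr F p_k$. *)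

From mathcomp Require Import ssreflect ssrfun ssrbool seq.
From Stdlib Require Import ClassicalEpsilon.

Set Implicit Arguments.
Unset Strict Implicit.
Unset Printing Implicit Defensive.

(* Projection algebras.  Maps are written on the right:                *)
(*   q θ_p  is  theta p q,   q δ_p  is  delta p q,                     *)
(* and composites are left to right:  θ_q θ_p = fun x => theta p (theta q x). *)
Definition is_projalg (P : Type) (theta delta : P -> P -> P) : Prop :=
  (forall p, theta p p = p) /\ (forall p, delta p p = p) /\
  (forall p q, theta (theta p q) p = theta p q) /\
  (forall p q, delta (delta p q) p = delta p q) /\
  (forall p q x, theta (theta p q) (theta q x) = theta p (theta q x)) /\
  (forall p q x, delta (delta p q) (delta q x) = delta p (delta q x)) /\
  (forall p x, delta p (theta p x) = theta p x) /\
  (forall p x, theta p (delta p x) = delta p x) /\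
  (forall p q x, theta p (theta (delta q p) x) = theta p (theta q x)) /\
  (forall p q x, delta p (delta (theta q p) x) = delta p (delta q x)).

Definition Frel (P : Type) (theta delta : P -> P -> P) (p q : P) : Prop :=
  p = delta p q /\ q = theta q p.

Fixpoint Fchain (P : Type) (theta delta : P -> P -> P) (s : seq P) : Prop :=
  match s with
  | p :: ((q :: _) as t) => Frel theta delta p q /\ Fchain theta delta t
  | _ => True
  end.

Definition is_DRC (S : Type) (mul : S -> S -> S) (D R : S -> S) : Prop :=
  (forall a b c, mul a (mul b c) = mul (mul a b) c) /\
  (forall a, mul (D a) a = a) /\ (forall a, mul a (R a) = a) /\
  (forall a b, D (mul a b) = D (mul a (D b))) /\
  (forall a b, R (mul a b) = R (mul (R a) b)) /\
  (forall a b, D (mul a b) = mul (mul (D a) (D (mul a b))) (D a)) /\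
  (forall a b, R (mul a b) = mul (mul (R b) (R (mul a b))) (R b)) /\
  (forall a, R (D a) = D a) /\ (forall a, D (R a) = R a).

Definition is_proj (S : Type) (D : S -> S) (x : S) : Prop := exists a, x = D a.

(* f : P -> S is an isomorphism of projection algebras from P onto P(S),
   where P(S) carries q θ_p = R(qp), q δ_p = D(pq). *)
Definition proj_iso (P : Type) (theta delta : P -> P -> P)
    (S : Type) (mul : S -> S -> S) (D R : S -> S) (f : P -> S) : Prop :=
  (forall p, is_proj D (f p)) /\
  (forall x, is_proj D x -> exists p, f p = x) /\
  (forall p q, f p = f q -> p = q) /\
  (forall p q, f (theta p q) = R (mul (f q) (f p))) /\
  (forall p q, f (delta p q) = D (mul (f p) (f q))).

Inductive sgen (S : Type) (mul : S -> S -> S) (X : S -> Prop) : S -> Prop :=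
  | sgen_base x : X x -> sgen mul X x
  | sgen_mul x y : sgen mul X x -> sgen mul X y -> sgen mul X (mul x y).

Definition proj_generated (S : Type) (mul : S -> S -> S) (D : S -> S) : Prop :=
  forall a, sgen mul (is_proj D) a.

Definition is_congruence (S : Type) (mul : S -> S -> S) (D R : S -> S)
    (sig : S -> S -> Prop) : Prop :=
  (forall a, sig a a) /\ (forall a b, sig a b -> sig b a) /\
  (forall a b c, sig a b -> sig b c -> sig a c) /\
  (forall a b c, sig a b -> sig (mul c a) (mul c b)) /\
  (forall a b c, sig a b -> sig (mul a c) (mul b c)) /\
  (forall a b, sig a b -> sig (D a) (D b)) /\
  (forall a b, sig a b -> sig (R a) (R b)).

Definition proj_separating (S : Type) (D : S -> S) (sig : S -> S -> Prop) : Prop :=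
  forall p q, is_proj D p -> is_proj D q -> sig p q -> p = q.

Definition is_psc (S : Type) (mul : S -> S -> S) (D R : S -> S)
    (sig : S -> S -> Prop) : Prop :=
  is_congruence mul D R sig /\ proj_separating D sig.

Definition is_mu (S : Type) (mul : S -> S -> S) (D R : S -> S)
    (sig : S -> S -> Prop) : Prop :=
  is_psc mul D R sig /\
  (forall tau, is_psc mul D R tau -> forall a b, tau a b -> sig a b).

Definition fundamental (S : Type) (mul : S -> S -> S) (D R : S -> S) : Prop :=
  exists mu, is_mu mul D R mu /\ (forall a b, mu a b <-> a = b).

Definition DRC_iso (S : Type) (mulS : S -> S -> S) (DS RS : S -> S)
    (T : Type) (mulT : T -> T -> T) (DT RT : T -> T) : Prop :=
  exists f : S -> T, bijective f /\
    (forall a b, f (mulS a b) = mulT (f a) (f b)) /\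
    (forall a, f (DS a) = DT (f a)) /\ (forall a, f (RS a) = RT (f a)).

Definition quot (T : Type) (r : T -> T -> Prop) : Type :=
  {X : T -> Prop | exists t, X = r t}.

Definition cls (T : Type) (r : T -> T -> Prop) (t : T) : quot r :=
  exist (fun X => exists t, X = r t) (r t) (ex_intro _ t erefl).

Definition rep (T : Type) (r : T -> T -> Prop) (X : quot r) : T :=
  proj1_sig (constructive_indefinite_description _ (proj2_sig X)).

Definition qmul (T : Type) (r : T -> T -> Prop) (m : T -> T -> T)
  (X Y : quot r) : quot r := cls r (m (rep X) (rep Y)).

Definition qun (T : Type) (r : T -> T -> Prop) (f : T -> T)
  (X : quot r) : quot r := cls r (f (rep X)).

(* A nonempty word x_p x_{p_1} ... x_{p_n} is the pair (p, [:: p_1; ...; p_n]). *)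
Section FreeDRC.
Variables (P : Type) (theta delta : P -> P -> P).

Definition word := (P * seq P)%type.
Definition wseq (w : word) : seq P := w.1 :: w.2.
Definition wcat (u v : word) : word := (u.1, u.2 ++ wseq v).

Inductive Fcong : word -> word -> Prop :=
  | Fc_idem p : Fcong (p, [:: p]) (p, [::])
  | Fc_theta p q : Fcong (p, [:: q]) (p, [:: theta q p])
  | Fc_delta p q : Fcong (p, [:: q]) (delta p q, [:: q])
  | Fc_refl u : Fcong u u
  | Fc_sym u v : Fcong u v -> Fcong v u
  | Fc_trans u v w : Fcong u v -> Fcong v w -> Fcong u w
  | Fc_left u v w : Fcong u v -> Fcong (wcat w u) (wcat w v)
  | Fc_right u v w : Fcong u v -> Fcong (wcat u w) (wcat v w).

Definition Ftype : Type := quot Fcong.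

Definition Fmul : Ftype -> Ftype -> Ftype := qmul wcat.

Definition FD (X : Ftype) : Ftype :=
  epsilon (inhabits X) (fun Y => exists p ps,
    Fchain theta delta (p :: ps) /\ X = cls Fcong (p, ps) /\
    Y = cls Fcong (p, [::])).

Definition FR (X : Ftype) : Ftype :=
  epsilon (inhabits X) (fun Y => exists p ps,
    Fchain theta delta (p :: ps) /\ X = cls Fcong (p, ps) /\
    Y = cls Fcong (last p ps, [::])).

(* M(P) <= T_P x T_P^op, generated by hat p = (theta_p, delta_p)       *)
Definition raw := ((P -> P) * (P -> P))%type.
Definition rmul (x y : raw) : raw :=
  (fun t => y.1 (x.1 t), fun t => x.2 (y.2 t)).
Definition hat (p : P) : raw := (theta p, delta p).
Definition prodhat (w : word) : raw := foldl (fun a q => rmul a (hat q)) (hat w.1) w.2.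

Definition inM (x : raw) : Prop := sgen rmul (fun y => exists p, y = hat p) x.

Definition Mtype : Type := {x : raw | inM x}.

Definition Mmul (X Y : Mtype) : Mtype :=
  exist inM (rmul (proj1_sig X) (proj1_sig Y))
    (sgen_mul (proj2_sig X) (proj2_sig Y)).

Definition MD (X : Mtype) : Mtype :=
  epsilon (inhabits X) (fun Y => exists p ps,
    Fchain theta delta (p :: ps) /\ proj1_sig X = prodhat (p, ps) /\
    proj1_sig Y = hat p).

Definition MR (X : Mtype) : Mtype :=
  epsilon (inhabits X) (fun Y => exists p ps,
    Fchain theta delta (p :: ps) /\ proj1_sig X = prodhat (p, ps) /\
    proj1_sig Y = hat (last p ps)).

End FreeDRC.

From Pilot Require Import Defs.
From mathcomp Require Import ssreflect ssrfun ssrbool seq.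
From Stdlib Require Import ClassicalEpsilon FunctionalExtensionality PropExtensionality ProofIrrelevance.

Set Implicit Arguments.
Unset Strict Implicit.
Unset Printing Implicit Defensive.

(* A word x_{p_1}...x_{p_k} acts on P by the pair (θ_{p_1}...θ_{p_k}, δ_{p_k}...δ_{p_1});
   this gives a semigroup morphism F(P) -> M(P). Every word is equal in F(P) to an
   F-chain, whose first and last letters can be read off from its image in M(P);
   so D and R are well defined on M(P), and F(P) -> M(P) is a surjective
   morphism of DRC-semigroups. An element of M(P) is determined by the
   projections R(x a) and D(a x), x in P, so every projection-separating
   congruence is contained in the kernel of a morphism onto M(P): hence M(P) is
   fundamental and the kernel of F(P) -> M(P) is μ. If S is projection-generated
   and fundamental, the actions a |-> (x |-> R(x a), x |-> D(a x)) define a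
   surjective morphism S -> M(P) whose kernel is projection-separating, hence
   trivial. *)

Lemma sig_eq (A : Type) (Pr : A -> Prop) (x y : sig Pr) : proj1_sig x = proj1_sig y -> x = y.
Proof. by apply: eq_sig_hprop => a; exact: proof_irrelevance. Qed.

Lemma rep_cls (T : Type) (r : T -> T -> Prop) (X : quot r) : X = cls r (rep X).
Proof.
apply: sig_eq; rewrite /rep /=.
exact: proj2_sig (constructive_indefinite_description _ (proj2_sig X)).
Qed.

Lemma rel_rep_cls (T : Type) (r : T -> T -> Prop) t : (forall x, r x x) -> r (rep (cls r t)) t.
Proof. by move=> rrefl; have /(f_equal (@proj1_sig _ _)) /= <- := rep_cls (cls r t). Qed.

Lemma cls_eq (T : Type) (r : T -> T -> Prop) t t' :
  (forall x y, r x y -> r y x) -> (forall x y z, r x y -> r y z -> r x z) ->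
  r t t' -> cls r t = cls r t'.
Proof.
move=> rsym rtrans h; apply: sig_eq; apply: functional_extensionality => z.
by apply: propositional_extensionality; split => h'; [apply: rtrans h'; exact: rsym | exact: rtrans h'].
Qed.

Definition kernel (S T : Type) (f : S -> T) (a b : S) : Prop := f a = f b.

Section Morphisms.
Variables (S : Type) (mulS : S -> S -> S) (DS RS : S -> S).
Variables (T : Type) (mulT : T -> T -> T) (DT RT : T -> T).

Definition DRC_morph (f : S -> T) : Prop :=
  [/\ forall a b, f (mulS a b) = mulT (f a) (f b),
      forall a, f (DS a) = DT (f a) & forall a, f (RS a) = RT (f a)].

Lemma DRC_iso_of_bij_morph f : DRC_morph f -> injective f ->
  (forall y, exists x, f x = y) -> DRC_iso mulS DS RS mulT DT RT.
Proof.
move=> [fmul fD fR] finj fsurj; exists f; split => //.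
pose g y := proj1_sig (constructive_indefinite_description _ (fsurj y)).
have fgK : cancel g f by move=> y; exact: proj2_sig (constructive_indefinite_description _ (fsurj y)).
by exists g => // x; apply: finj; rewrite fgK.
Qed.

Lemma DRC_iso_sym : DRC_iso mulS DS RS mulT DT RT -> DRC_iso mulT DT RT mulS DS RS.
Proof.
case=> f [[g fK gK] [fmul [fD fR]]]; have finj := can_inj fK.
exists g; split; first by exists f.
by split; [move=> a b | split => a]; apply: finj; rewrite ?fmul ?fD ?fR !gK.
Qed.

Lemma kernel_psc f : DRC_morph f ->
  (forall p q, is_proj DS p -> is_proj DS q -> f p = f q -> p = q) ->
  is_psc mulS DS RS (kernel f).
Proof.
case=> fmul fD fR finj; rewrite /kernel; split => //.
do 3 (split; first by move=> *; congruence).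
split; first by move=> a b c e; rewrite !fmul e.
split; first by move=> a b c e; rewrite !fmul e.
by split => a b e; rewrite ?fD ?fR e.
Qed.

End Morphisms.

Lemma quot_kernel_iso (S : Type) (mulS : S -> S -> S) (DS RS : S -> S)
    (T : Type) (mulT : T -> T -> T) (DT RT : T -> T) (f : S -> T) :
  DRC_morph mulS DS RS mulT DT RT f -> (forall y, exists x, f x = y) ->
  DRC_iso mulT DT RT (@qmul _ (kernel f) mulS) (@qun _ (kernel f) DS) (@qun _ (kernel f) RS).
Proof.
move=> [fmul fD fR] fsurj; apply: DRC_iso_sym.
have frep a : f (rep (cls (kernel f) a)) = f a by apply: (@rel_rep_cls _ (kernel f)) => x.
apply: (DRC_iso_of_bij_morph (f := fun X : quot (kernel f) => f (rep X))).
- by split => [X Y|X|X]; rewrite frep ?fmul ?fD ?fR.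
- move=> X Y e; rewrite (rep_cls X) (rep_cls Y).
  by apply: cls_eq e => [a b | a b c]; rewrite /kernel => ->.
- by move=> y; have [a <-] := fsurj y; exists (cls (kernel f) a).
Qed.

Section ProjectionAlgebra.
Variables (P : Type) (theta delta : P -> P -> P).
Hypothesis HP : is_projalg theta delta.

Lemma theta_self p : theta p p = p.
Proof. by case: HP. Qed.
Lemma delta_self p : delta p p = p.
Proof. by case: HP => _ []. Qed.
Lemma theta_at_image p q : theta (theta p q) p = theta p q.
Proof. by case: HP => _ [_ []]. Qed.
Lemma delta_at_image p q : delta (delta p q) p = delta p q.
Proof. by case: HP => _ [_ [_ []]]. Qed.
Lemma theta_theta_image p q x : theta (theta p q) (theta q x) = theta p (theta q x).
Proof. by case: HP => _ [_ [_ [_ []]]]. Qed.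
Lemma delta_delta_image p q x : delta (delta p q) (delta q x) = delta p (delta q x).
Proof. by case: HP => _ [_ [_ [_ [_ []]]]]. Qed.
Lemma delta_theta p x : delta p (theta p x) = theta p x.
Proof. by case: HP => _ [_ [_ [_ [_ [_ []]]]]]. Qed.
Lemma theta_delta p x : theta p (delta p x) = delta p x.
Proof. by case: HP => _ [_ [_ [_ [_ [_ [_ []]]]]]]. Qed.
Lemma theta_theta_delta p q x : theta p (theta (delta q p) x) = theta p (theta q x).
Proof. by case: HP => _ [_ [_ [_ [_ [_ [_ [_ []]]]]]]]. Qed.
Lemma delta_delta_theta p q x : delta p (delta (theta q p) x) = delta p (delta q x).
Proof. by case: HP => _ [_ [_ [_ [_ [_ [_ [_ []]]]]]]]. Qed.

Lemma theta_idem p x : theta p (theta p x) = theta p x.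
Proof. by have := theta_delta p (theta p x); rewrite !delta_theta. Qed.
Lemma delta_idem p x : delta p (delta p x) = delta p x.
Proof. by have := delta_theta p (delta p x); rewrite !theta_delta. Qed.

Definition below (r p : P) : Prop := theta p r = r.

Lemma below_delta r p : below r p -> delta p r = r.
Proof. by rewrite /below => <-; rewrite delta_theta. Qed.
Lemma delta_below r p : delta p r = r -> below r p.
Proof. by rewrite /below => <-; rewrite theta_delta. Qed.
Lemma below_theta_image p x : below (theta p x) p.
Proof. exact: theta_idem. Qed.
Lemma below_delta_image p x : below (delta p x) p.
Proof. exact: theta_delta. Qed.

Lemma below_theta_self r p : below r p -> theta r p = r.
Proof. by move=> H; have := theta_at_image p r; rewrite H. Qed.
Lemma below_delta_self r p : below r p -> delta r p = r.
Proof. by move=> H; have := delta_at_image p r; rewrite (below_delta H). Qed.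

Lemma theta_below_l r p x : below r p -> theta p (theta r x) = theta r x.
Proof. by move=> H; have := theta_theta_image p r x; rewrite H theta_idem. Qed.
Lemma theta_below_r r p x : below r p -> theta r (theta p x) = theta r x.
Proof. by move=> H; have := theta_theta_delta r p x; rewrite (below_delta H) theta_idem. Qed.
Lemma delta_below_l r p x : below r p -> delta p (delta r x) = delta r x.
Proof. by move=> H; have := delta_delta_image p r x; rewrite (below_delta H) delta_idem. Qed.
Lemma delta_below_r r p x : below r p -> delta r (delta p x) = delta r x.
Proof. by move=> H; have := delta_delta_theta r p x; rewrite H delta_idem. Qed.

Lemma below_antisym p q : below p q -> below q p -> p = q.
Proof. by move=> hpq hqp; have := theta_at_image q p; rewrite hpq hqp. Qed.

Lemma delta_theta_swap p q : delta p (theta q p) = delta p q.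
Proof.
by have := delta_delta_theta p q q; rewrite (below_delta_self (below_theta_image q p)) delta_self.
Qed.

Lemma Frel_delta_theta p q : Frel theta delta (delta p q) (theta q p).
Proof.
split.
- by rewrite -(delta_theta q p) delta_delta_image delta_theta delta_theta_swap.
- rewrite -(theta_delta p q) theta_theta_image theta_delta.
  by have := theta_theta_delta q p p; rewrite (below_theta_self (below_delta_image p q)) theta_self.
Qed.

Lemma Frel_below_theta p q s : Frel theta delta p q -> below s q -> theta s p = s.
Proof.
case=> _ hq hs; have := theta_below_r p hs; rewrite -hq => <-.
exact: below_theta_self.
Qed.

(** * Normal forms of words *)

Notation hat := (hat theta delta).
Notation prodhat := (prodhat theta delta).
Notation Fcong := (Fcong theta delta).
Notation Fchain := (Fchain theta delta).
Notation Frel := (Frel theta delta).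

Lemma raw_eq (x y : raw P) : x.1 =1 y.1 -> x.2 =1 y.2 -> x = y.
Proof.
case: x => a b; case: y => c d /= h1 h2.
by rewrite (functional_extensionality _ _ h1) (functional_extensionality _ _ h2).
Qed.

Lemma rmulA (x y z : raw P) : rmul x (rmul y z) = rmul (rmul x y) z.
Proof. by []. Qed.

Lemma hat_idem p : rmul (hat p) (hat p) = hat p.
Proof. by apply: raw_eq => t /=; [exact: theta_idem | exact: delta_idem]. Qed.
Lemma hat_theta p q : rmul (hat p) (hat q) = rmul (hat p) (hat (theta q p)).
Proof. by apply: raw_eq => t /=; [rewrite theta_theta_image | rewrite delta_delta_theta]. Qed.
Lemma hat_delta p q : rmul (hat p) (hat q) = rmul (hat (delta p q)) (hat q).
Proof. by apply: raw_eq => t /=; [rewrite theta_theta_delta | rewrite delta_delta_image]. Qed.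
Lemma hat_below_l p r : below r p -> rmul (hat p) (hat r) = hat r.
Proof. by move=> h; apply: raw_eq => t /=; [exact: theta_below_r | exact: delta_below_l]. Qed.
Lemma hat_below_r p r : below r p -> rmul (hat r) (hat p) = hat r.
Proof. by move=> h; apply: raw_eq => t /=; [exact: theta_below_l | exact: delta_below_r]. Qed.

Lemma hat_inj p q : hat p = hat q -> p = q.
Proof.
case=> e _; apply: below_antisym; rewrite /below; first by rewrite -e theta_self.
by rewrite e theta_self.
Qed.

Lemma foldl_rmul a b s :
  foldl (fun a q => rmul a (hat q)) (rmul a b) s =
  rmul a (foldl (fun a q => rmul a (hat q)) b s).
Proof. by elim: s b => //= x s IH b; rewrite -IH. Qed.

Lemma prodhat_cat u v : prodhat (wcat u v) = rmul (prodhat u) (prodhat v).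
Proof.
case: u => p ps; case: v => q qs.
by rewrite /prodhat /wcat /wseq /= foldl_cat /= foldl_rmul.
Qed.

Lemma prodhat_rcons p s x : prodhat (p, rcons s x) = rmul (prodhat (p, s)) (hat x).
Proof. by rewrite /prodhat /= foldl_rcons. Qed.

Lemma prodhat_Fcong u v : Fcong u v -> prodhat u = prodhat v.
Proof.
elim=> //=.
- exact: hat_idem.
- exact: hat_theta.
- exact: hat_delta.
- by move=> u0 v0 w _ ->.
- by move=> u0 v0 w _ h; rewrite !prodhat_cat h.
- by move=> u0 v0 w _ h; rewrite !prodhat_cat h.
Qed.

Lemma hat_first_prodhat w : rmul (hat w.1) (prodhat w) = prodhat w.
Proof. by case: w => p ps; rewrite /prodhat /= -foldl_rmul hat_idem. Qed.

Lemma prodhat_hat_last w : rmul (prodhat w) (hat (last w.1 w.2)) = prodhat w.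
Proof.
case: w => p ps /=; case/lastP: ps => [|s x]; first by rewrite /prodhat /= hat_idem.
by rewrite last_rcons prodhat_rcons -rmulA hat_idem.
Qed.

Lemma Fchain_rcons p s x :
  Fchain (p :: rcons s x) <-> Fchain (p :: s) /\ Frel (last p s) x.
Proof.
elim: s p => [|y s IH] p; first by split; [case | case].
change (Frel p y /\ Fchain (y :: rcons s x) <->
  (Frel p y /\ Fchain (y :: s)) /\ Frel (last y s) x).
by rewrite IH; split; [case=> a [b c] | case=> [[a b] c]].
Qed.

Lemma Fcong_step p q : Fcong (p, [:: q]) (delta p q, [:: theta q p]).
Proof.
apply: Fc_trans (Fc_theta _ _ p q) _; rewrite -(delta_theta_swap p q); exact: Fc_delta.
Qed.

(* The first and last letters of the F-chain representing a word, read off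
   from its image in M(P). *)
Definition wordD (w : word P) : P := (prodhat w).2 (last w.1 w.2).
Definition wordR (w : word P) : P := (prodhat w).1 w.1.

Lemma wordD_cat u v : wordD (wcat u v) = (prodhat u).2 (wordD v).
Proof. by rewrite /wordD prodhat_cat; case: u => p ps; case: v => q qs /=; rewrite last_cat. Qed.

Lemma wordR_cat u v : wordR (wcat u v) = (prodhat v).1 (wordR u).
Proof. by rewrite /wordR prodhat_cat. Qed.

Lemma wordD_letter q : wordD (q, [::]) = q. Proof. exact: delta_self. Qed.
Lemma wordR_letter q : wordR (q, [::]) = q. Proof. exact: theta_self. Qed.

Lemma Fchain_wordDR p ps :
  Fchain (p :: ps) -> wordD (p, ps) = p /\ wordR (p, ps) = last p ps.
Proof.
elim/last_ind: ps => [|ps x IH]; first by rewrite /wordD /wordR /= theta_self delta_self.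
move/Fchain_rcons => [hc [hp hx]]; have [iD iR] := IH hc.
rewrite /wordD /wordR /= last_rcons prodhat_rcons /= delta_self; split.
- by rewrite -(prodhat_hat_last (p, ps)) /= -hp.
- by rewrite -/(wordR (p, ps)) iR -hx.
Qed.

(* Rewrite x_{p_k} x_q as x_{q δ_{p_k}} x_{p_k θ_q} and absorb the first factor
   into the shorter chain. *)
Lemma Fchain_extend p ps q : Fchain (p :: ps) ->
  exists p' ps', [/\ Fchain (p' :: ps'), Fcong (wcat (p, ps) (q, [::])) (p', ps'),
     p' = (prodhat (p, ps)).2 q & last p' ps' = theta q (last p ps)].
Proof.
elim/last_ind: ps q => [|ps pk IH] q.
  move=> _; exists (delta p q), [:: theta q p].
  by split => //=; [split => //; exact: Frel_delta_theta | exact: Fcong_step].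
move/Fchain_rcons => [hc hf].
have [p0 [ps0 [h1 h2 h3 h4]]] := IH (delta pk q) hc.
have hl : last p0 ps0 = delta pk q.
  by rewrite h4; apply: (Frel_below_theta hf); exact: below_delta_image.
exists p0, (rcons ps0 (theta q pk)); split.
- by apply/Fchain_rcons; split => //; rewrite hl; exact: Frel_delta_theta.
- have -> : wcat (p, rcons ps pk) (q, [::]) = wcat (p, ps) (pk, [:: q]).
    by rewrite /wcat /wseq /= cat_rcons.
  apply: Fc_trans (Fc_left (p, ps) (Fcong_step pk q)) _.
  have -> : wcat (p, ps) (delta pk q, [:: theta q pk]) =
            wcat (wcat (p, ps) (delta pk q, [::])) (theta q pk, [::]).
    by rewrite /wcat /wseq /= -catA.
  by apply: Fc_trans (Fc_right _ h2) _; rewrite /wcat /wseq /= cats1; exact: Fc_refl.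
- by rewrite h3 prodhat_rcons.
- by rewrite !last_rcons.
Qed.

Lemma Fcong_Fchain w : exists p ps, [/\ Fchain (p :: ps), Fcong w (p, ps),
   p = wordD w & last p ps = wordR w].
Proof.
case: w => p ps; elim/last_ind: ps => [|ps q [p0 [ps0 [h1 h2 h3 h4]]]].
  exists p, [::]; split => //=; first exact: Fc_refl.
  - by rewrite wordD_letter.
  - by rewrite wordR_letter.
have [p' [ps' [g1 g2 g3 g4]]] := Fchain_extend q h1.
exists p', ps'; split => //.
- have -> : (p, rcons ps q) = wcat (p, ps) (q, [::]) by rewrite /wcat /= cats1.
  exact: Fc_trans (Fc_right _ h2) g2.
- by rewrite g3 /wordD /= last_rcons prodhat_rcons /= delta_self -(prodhat_Fcong h2).
- by rewrite g4 h4 /wordR prodhat_rcons.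
Qed.

Lemma Fchain_prodhat_inj p ps q qs : Fchain (p :: ps) -> Fchain (q :: qs) ->
  prodhat (p, ps) = prodhat (q, qs) -> p = q /\ last p ps = last q qs.
Proof.
move=> c1 c2 e.
have [h1 t1] := Fchain_wordDR c1; have [h2 t2] := Fchain_wordDR c2.
have below_first r rs t : below ((prodhat (r, rs)).2 t) r.
  by apply: delta_below; rewrite -{2}(hat_first_prodhat (r, rs)).
have ep : p = q.
  apply: below_antisym; first by rewrite -{1}h1 /wordD e.
  by rewrite -{1}h2 /wordD -e.
by split => //; rewrite -t1 -t2 /wordR e /= ep.
Qed.

Lemma wordDR_prodhat u v : prodhat u = prodhat v -> wordD u = wordD v /\ wordR u = wordR v.
Proof.
move=> e.
have [p [ps [c1 f1 h1 t1]]] := Fcong_Fchain u.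
have [q [qs [c2 f2 h2 t2]]] := Fcong_Fchain v.
have := Fchain_prodhat_inj c1 c2; rewrite -(prodhat_Fcong f1) -(prodhat_Fcong f2) e.
by case=> // a b; rewrite -h1 -h2 -t1 -t2 b a.
Qed.

Lemma hat_wordD_prodhat w : rmul (hat (wordD w)) (prodhat w) = prodhat w.
Proof.
have [p [ps [_ f <- _]]] := Fcong_Fchain w.
by rewrite (prodhat_Fcong f) (hat_first_prodhat (p, ps)).
Qed.

Lemma prodhat_hat_wordR w : rmul (prodhat w) (hat (wordR w)) = prodhat w.
Proof.
have [p [ps [_ f _ <-]]] := Fcong_Fchain w.
by rewrite (prodhat_Fcong f) (prodhat_hat_last (p, ps)).
Qed.

Lemma below_wordD w t : below ((prodhat w).2 t) (wordD w).
Proof. by apply: delta_below; rewrite -{2}(hat_wordD_prodhat w). Qed.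

Lemma below_wordR w t : below ((prodhat w).1 t) (wordR w).
Proof. by rewrite /below -{2}(prodhat_hat_wordR w). Qed.

(** * The DRC-semigroup M(P) *)

Notation MT := (Mtype theta delta).
Notation Mmul := (@Mmul P theta delta).
Notation MD := (@MD P theta delta).
Notation MR := (@MR P theta delta).
Notation inM := (inM theta delta).

Definition Mletter (p : P) : MT := exist _ (hat p) (sgen_base _ (ex_intro _ p erefl)).

Lemma inM_prodhat w : inM (prodhat w).
Proof.
case: w => p ps; rewrite /prodhat /=.
have : inM (hat p) by apply: sgen_base; exists p.
elim: ps (hat p) => //= q s IH a ha; apply: IH; apply: sgen_mul ha _.
by apply: sgen_base; exists q.
Qed.

Lemma M_prodhat (X : MT) : exists w, proj1_sig X = prodhat w.
Proof.
case: X => x /=; elim=> [y [p ->] | y z _ [u ->] _ [v ->]]; first by exists (p, [::]).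
by exists (wcat u v); rewrite prodhat_cat.
Qed.

Lemma Mmul_word (X Y : MT) u v : proj1_sig X = prodhat u -> proj1_sig Y = prodhat v ->
  proj1_sig (Mmul X Y) = prodhat (wcat u v).
Proof. by move=> /= -> ->; rewrite prodhat_cat. Qed.

Lemma MD_word (X : MT) w : proj1_sig X = prodhat w -> proj1_sig (MD X) = hat (wordD w).
Proof.
move=> e; rewrite /Defs.MD.
set spec := fun Y : MT => _.
have [p [ps [c f _ _]]] := Fcong_Fchain w.
have ex : exists Y, spec Y by exists (Mletter p), p, ps; rewrite e (prodhat_Fcong f).
have [p' [ps' [c' [e' ->]]]] := epsilon_spec (inhabits X) spec ex.
have := wordDR_prodhat (u := w) (v := (p', ps')); rewrite -e e' => /(_ erefl) [-> _].
by rewrite (Fchain_wordDR c').1.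
Qed.

Lemma MR_word (X : MT) w : proj1_sig X = prodhat w -> proj1_sig (MR X) = hat (wordR w).
Proof.
move=> e; rewrite /Defs.MR.
set spec := fun Y : MT => _.
have [p [ps [c f _ _]]] := Fcong_Fchain w.
have ex : exists Y, spec Y by exists (Mletter (last p ps)), p, ps; rewrite e (prodhat_Fcong f).
have [p' [ps' [c' [e' ->]]]] := epsilon_spec (inhabits X) spec ex.
have := wordDR_prodhat (u := w) (v := (p', ps')); rewrite -e e' => /(_ erefl) [_ ->].
by rewrite (Fchain_wordDR c').2.
Qed.

Lemma M_DRC : is_DRC Mmul MD MR.
Proof.
split; first by move=> a b c; apply: sig_eq.
split.
  by move=> a; have [u eu] := M_prodhat a; apply: sig_eq; rewrite /= (MD_word eu) eu hat_wordD_prodhat.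
split.
  by move=> a; have [u eu] := M_prodhat a; apply: sig_eq; rewrite /= (MR_word eu) eu prodhat_hat_wordR.
split.
  move=> a b; have [u eu] := M_prodhat a; have [v ev] := M_prodhat b; apply: sig_eq.
  rewrite (MD_word (Mmul_word eu ev)) (MD_word (Mmul_word (v := (wordD v, [::])) eu (MD_word ev))).
  by rewrite !wordD_cat wordD_letter.
split.
  move=> a b; have [u eu] := M_prodhat a; have [v ev] := M_prodhat b; apply: sig_eq.
  rewrite (MR_word (Mmul_word eu ev)) (MR_word (Mmul_word (u := (wordR u, [::])) (MR_word eu) ev)).
  by rewrite !wordR_cat wordR_letter.
split.
  move=> a b; have [u eu] := M_prodhat a; have [v ev] := M_prodhat b; apply: sig_eq.
  rewrite /= (MD_word (Mmul_word eu ev)) (MD_word eu) wordD_cat.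
  by rewrite hat_below_l ?hat_below_r //; exact: below_wordD.
split.
  move=> a b; have [u eu] := M_prodhat a; have [v ev] := M_prodhat b; apply: sig_eq.
  rewrite /= (MR_word (Mmul_word eu ev)) (MR_word ev) wordR_cat.
  by rewrite hat_below_l ?hat_below_r //; exact: below_wordR.
split.
  move=> a; have [u eu] := M_prodhat a; apply: sig_eq.
  by rewrite (MR_word (w := (wordD u, [::])) (MD_word eu)) (MD_word eu) wordR_letter.
move=> a; have [u eu] := M_prodhat a; apply: sig_eq.
by rewrite (MD_word (w := (wordR u, [::])) (MR_word eu)) (MR_word eu) wordD_letter.
Qed.

Lemma MR_Mletter_mul x (a : MT) : proj1_sig (MR (Mmul (Mletter x) a)) = hat ((proj1_sig a).1 x).
Proof.
have [w e] := M_prodhat a.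
by rewrite (MR_word (Mmul_word (X := Mletter x) (u := (x, [::])) erefl e)) wordR_cat wordR_letter e.
Qed.

Lemma MD_mul_Mletter x (a : MT) : proj1_sig (MD (Mmul a (Mletter x))) = hat ((proj1_sig a).2 x).
Proof.
have [w e] := M_prodhat a.
by rewrite (MD_word (Mmul_word (Y := Mletter x) (v := (x, [::])) e erefl)) wordD_cat wordD_letter e.
Qed.

Lemma MD_Mletter x : MD (Mletter x) = Mletter x.
Proof. by apply: sig_eq; rewrite (MD_word (X := Mletter x) (w := (x, [::])) erefl) wordD_letter. Qed.

Lemma Mletter_inj : injective Mletter.
Proof. by move=> x y /(f_equal (@proj1_sig _ _)) /hat_inj. Qed.

Lemma is_proj_M (a : MT) : is_proj MD a <-> exists p, a = Mletter p.
Proof.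
split; last by case=> p ->; exists (Mletter p); rewrite MD_Mletter.
case=> b ->; have [w e] := M_prodhat b.
by exists (wordD w); apply: sig_eq; rewrite (MD_word e).
Qed.

(* [h a] is recovered from the projections [R (e(x) a)] and [D (a e(x))], x in P. *)
Lemma psc_sub_kernel (S : Type) (mul : S -> S -> S) (D R : S -> S) (h : S -> MT) (e : P -> S) :
  DRC_morph mul D R Mmul MD MR h -> (forall a, is_proj D (R a)) ->
  (forall x, is_proj D (e x)) -> (forall x, h (e x) = Mletter x) ->
  forall tau, is_psc mul D R tau -> forall a b, tau a b -> h a = h b.
Proof.
move=> [hmul hD hR] projR proje he tau [[_ [_ [_ [tl [tr [tD tR]]]]]] sep] a b hab.
apply: sig_eq; apply: raw_eq => x.
- have : R (mul (e x) a) = R (mul (e x) b).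
    by apply: sep; [exact: projR | exact: projR | exact/tR/tl].
  move/(f_equal (fun s => proj1_sig (h s))); rewrite !hR !hmul he !MR_Mletter_mul.
  exact: hat_inj.
- have : D (mul a (e x)) = D (mul b (e x)).
    by apply: sep; [exists (mul a (e x)) | exists (mul b (e x)) | exact/tD/tr].
  move/(f_equal (fun s => proj1_sig (h s))); rewrite !hD !hmul he !MD_mul_Mletter.
  exact: hat_inj.
Qed.

Lemma M_fundamental : fundamental Mmul MD MR.
Proof.
have id_morph : DRC_morph Mmul MD MR Mmul MD MR id by [].
exists (kernel id); split => //; split; first exact: kernel_psc.
have [_ [_ [_ [_ [_ [_ [_ [_ DR]]]]]]]] := M_DRC.
apply: (psc_sub_kernel id_morph) => [a|x|//].
- by exists (MR a); rewrite DR.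
- by exists (Mletter x); rewrite MD_Mletter.
Qed.

Lemma M_proj_generated : proj_generated Mmul MD.
Proof.
case=> x hx; elim: hx (hx) => [y [p ey] hy | y z hy IHy hz IHz hyz].
  have -> : exist inM y hy = Mletter p by apply: sig_eq.
  by apply/sgen_base/is_proj_M; exists p.
have -> : exist inM (rmul y z) hyz = Mmul (exist _ y hy) (exist _ z hz) by apply: sig_eq.
exact: sgen_mul (IHy hy) (IHz hz).
Qed.

Lemma M_proj_iso : proj_iso theta delta Mmul MD MR Mletter.
Proof.
split; first by move=> p; apply/is_proj_M; exists p.
split; first by move=> x /is_proj_M [p ->]; exists p.
split; first exact: Mletter_inj.
by split=> p q; apply: sig_eq; rewrite ?MR_Mletter_mul ?MD_mul_Mletter.
Qed.

Notation FT := (Ftype theta delta).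
Notation Fmul := (@Fmul P theta delta).
Notation FD := (@FD P theta delta).
Notation FR := (@FR P theta delta).

Definition Fletter (x : P) : FT := cls Fcong (x, [::]).

Definition FtoM (X : FT) : MT := exist _ (prodhat (rep X)) (inM_prodhat _).

Lemma prodhat_rep_cls w : prodhat (rep (cls Fcong w)) = prodhat w.
Proof. by apply: prodhat_Fcong; apply: rel_rep_cls => u; exact: Fc_refl. Qed.

Lemma FD_cls (X : FT) : FD X = Fletter (wordD (rep X)).
Proof.
rewrite /Defs.FD; set spec := fun Y : FT => _.
have [p [ps [c f _ _]]] := Fcong_Fchain (rep X).
have ex : exists Y, spec Y.
  exists (Fletter p), p, ps; split => //; split => //.
  by rewrite {1}(rep_cls X); apply: cls_eq f; [exact: Fc_sym | exact: Fc_trans].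
have [p' [ps' [c' [-> ->]]]] := epsilon_spec (inhabits X) spec ex.
by rewrite (wordDR_prodhat (prodhat_rep_cls _)).1 (Fchain_wordDR c').1.
Qed.

Lemma FR_cls (X : FT) : FR X = Fletter (wordR (rep X)).
Proof.
rewrite /Defs.FR; set spec := fun Y : FT => _.
have [p [ps [c f _ _]]] := Fcong_Fchain (rep X).
have ex : exists Y, spec Y.
  exists (Fletter (last p ps)), p, ps; split => //; split => //.
  by rewrite {1}(rep_cls X); apply: cls_eq f; [exact: Fc_sym | exact: Fc_trans].
have [p' [ps' [c' [-> ->]]]] := epsilon_spec (inhabits X) spec ex.
by rewrite (wordDR_prodhat (prodhat_rep_cls _)).2 (Fchain_wordDR c').2.
Qed.

Lemma FD_Fletter x : FD (Fletter x) = Fletter x.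
Proof. by rewrite FD_cls (wordDR_prodhat (prodhat_rep_cls _)).1 wordD_letter. Qed.

Lemma FtoM_Fletter x : FtoM (Fletter x) = Mletter x.
Proof. by apply: sig_eq; rewrite /= prodhat_rep_cls. Qed.

Lemma FtoM_morph : DRC_morph Fmul FD FR Mmul MD MR FtoM.
Proof.
split => [X Y | X | X]; apply: sig_eq.
- by rewrite /= prodhat_rep_cls prodhat_cat.
- by rewrite FD_cls /= prodhat_rep_cls (MD_word (X := FtoM X) (w := rep X) erefl).
- by rewrite FR_cls /= prodhat_rep_cls (MR_word (X := FtoM X) (w := rep X) erefl).
Qed.

Lemma FtoM_surj (Y : MT) : exists X, FtoM X = Y.
Proof.
have [w e] := M_prodhat Y.
by exists (cls Fcong w); apply: sig_eq; rewrite /= prodhat_rep_cls e.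
Qed.

Lemma F_mu : is_mu Fmul FD FR (kernel FtoM).
Proof.
have is_proj_Fletter x : is_proj FD (Fletter x) by exists (Fletter x); rewrite FD_Fletter.
split.
  apply: kernel_psc FtoM_morph _ => _ _ [a ->] [b ->].
  by rewrite !FD_cls !FtoM_Fletter => /Mletter_inj ->.
apply: (psc_sub_kernel FtoM_morph) => [a|//|]; last exact: FtoM_Fletter.
by rewrite FR_cls.
Qed.

(** * Uniqueness *)

Section Uniqueness.
Variables (S : Type) (mul : S -> S -> S) (D R : S -> S) (g : P -> S).
Hypotheses (HS : is_DRC mul D R) (Hg : proj_iso theta delta mul D R g).

(* [x0] only witnesses that P is inhabited; on projections the result does not
   depend on it. *)
Definition proj_index (x0 : P) (y : S) : P := epsilon (inhabits x0) (fun p => g p = y).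

Definition actions (a : S) : raw P :=
  (fun x => proj_index x (R (mul (g x) a)), fun x => proj_index x (D (mul a (g x)))).

Lemma g_proj_index x0 y : is_proj D y -> g (proj_index x0 y) = y.
Proof.
case: Hg => _ [gsurj _] /gsurj ex.
exact: (epsilon_spec (inhabits x0) (fun p => g p = y) ex).
Qed.

Lemma proj_index_g x0 p : proj_index x0 (g p) = p.
Proof. by case: Hg => gproj [_ [ginj _]]; apply: ginj; rewrite g_proj_index; last exact: gproj. Qed.

Lemma actions_g p : actions (g p) = hat p.
Proof.
case: Hg => _ [_ [_ [gtheta gdelta]]].
by apply: raw_eq => x /=; rewrite -?gtheta -?gdelta proj_index_g.
Qed.

Lemma is_proj_R a : is_proj D (R a).
Proof. by case: HS => _ [_ [_ [_ [_ [_ [_ [_ DR]]]]]]]; exists (R a); rewrite DR. Qed.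

Lemma actions_mul a b : actions (mul a b) = rmul (actions a) (actions b).
Proof.
case: HS => mulA [_ [_ [DD [RR _]]]].
have indep x0 x1 y : is_proj D y -> proj_index x0 y = proj_index x1 y.
  by case: Hg => _ [_ [ginj _]] hy; apply: ginj; rewrite !g_proj_index.
apply: raw_eq => x /=; rewrite g_proj_index.
- by rewrite -RR mulA; apply: indep; exact: is_proj_R.
- exact: is_proj_R.
- by rewrite -DD mulA; apply: indep; exists (mul (mul a b) (g x)).
- by exists (mul b (g x)).
Qed.

Hypothesis Hgen : proj_generated mul D.

Lemma inM_actions a : inM (actions a).
Proof.
elim: (Hgen a) => [y hy | y z _ hy _ hz]; last by rewrite actions_mul; exact: sgen_mul.
by case: Hg => _ [gsurj _]; have [p <-] := gsurj y hy; rewrite actions_g; apply: sgen_base; exists p.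
Qed.

Definition StoM (a : S) : MT := exist _ (actions a) (inM_actions a).

Lemma StoM_g p : StoM (g p) = Mletter p.
Proof. by apply: sig_eq; exact: actions_g. Qed.

Lemma StoM_mul a b : StoM (mul a b) = Mmul (StoM a) (StoM b).
Proof. by apply: sig_eq; exact: actions_mul. Qed.

Lemma StoM_morph : DRC_morph mul D R Mmul MD MR StoM.
Proof.
case: HS => _ [Da [aR _]]; case: Hg => _ [gsurj _].
split=> [|a|a]; first exact: StoM_mul.
- have [p0 e0] := gsurj (R a) (is_proj_R a); have [q e1] := gsurj (D a) (ex_intro _ a erefl).
  have ha : mul a (g p0) = a by rewrite e0 aR.
  rewrite -e1 StoM_g -ha StoM_mul StoM_g; apply: sig_eq.
  by rewrite MD_mul_Mletter /= ha -e1 proj_index_g.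
- have [p0 e0] := gsurj (D a) (ex_intro _ a erefl); have [q e1] := gsurj (R a) (is_proj_R a).
  have ha : mul (g p0) a = a by rewrite e0 Da.
  rewrite -e1 StoM_g -ha StoM_mul StoM_g; apply: sig_eq.
  by rewrite MR_Mletter_mul /= ha -e1 proj_index_g.
Qed.

Lemma StoM_surj (Y : MT) : exists a, StoM a = Y.
Proof.
case: Y => x hx; suff [a ea] : exists a, actions a = x by exists a; apply: sig_eq.
elim: hx => [_ [p ->] | y z _ [a <-] _ [b <-]]; first by exists (g p); exact: actions_g.
by exists (mul a b); exact: actions_mul.
Qed.

Lemma StoM_inj : fundamental mul D R -> injective StoM.
Proof.
case=> mu [[_ mumax] mueq] a b e; apply/mueq; apply: (mumax _ _ a b e).
apply: kernel_psc StoM_morph _ => p q.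
case: Hg => _ [gsurj _] /gsurj [x <-] /gsurj [y <-].
by rewrite !StoM_g => /Mletter_inj ->.
Qed.

Lemma fundamental_DRC_iso_M : fundamental mul D R -> DRC_iso mul D R Mmul MD MR.
Proof. by move=> Hfund; apply: DRC_iso_of_bij_morph StoM_morph (StoM_inj Hfund) StoM_surj. Qed.

End Uniqueness.
End ProjectionAlgebra.

Theorem theorem8p19 (P : Type) (theta delta : P -> P -> P)
  (HP : is_projalg theta delta) :
  (* M(P) is a projection-generated fundamental DRC-semigroup
     with projection algebra isomorphic to P *)
  (is_DRC (@Mmul P theta delta) (@MD P theta delta) (@MR P theta delta) /\
   proj_generated (@Mmul P theta delta) (@MD P theta delta) /\
   fundamental (@Mmul P theta delta) (@MD P theta delta) (@MR P theta delta) /\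
   (exists f : P -> Mtype theta delta,
      proj_iso theta delta (@Mmul P theta delta) (@MD P theta delta) (@MR P theta delta) f)) /\
  (* uniqueness up to isomorphism *)
  (forall (S : Type) (mul : S -> S -> S) (D R : S -> S),
     is_DRC mul D R -> proj_generated mul D -> fundamental mul D R ->
     (exists f : P -> S, proj_iso theta delta mul D R f) ->
     DRC_iso mul D R (@Mmul P theta delta) (@MD P theta delta) (@MR P theta delta)) /\
  (* M(P) is isomorphic to F(P)/mu_F(P) *)
  (exists mu : Ftype theta delta -> Ftype theta delta -> Prop,
     is_mu (@Fmul P theta delta) (@FD P theta delta) (@FR P theta delta) mu /\
     DRC_iso (@Mmul P theta delta) (@MD P theta delta) (@MR P theta delta)
       (@qmul _ mu (@Fmul P theta delta)) (@qun _ mu (@FD P theta delta))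
       (@qun _ mu (@FR P theta delta))).
Proof.
split.
  split; first exact: M_DRC.
  split; first exact: M_proj_generated.
  split; first exact: M_fundamental.
  by exists (Mletter theta delta); exact: M_proj_iso.
split.
  by move=> S mul D R HS Hgen Hfund [g Hg]; exact: fundamental_DRC_iso_M Hg Hgen Hfund.
exists (kernel (@FtoM _ theta delta)); split; first exact: F_mu.
apply: quot_kernel_iso; [exact: FtoM_morph | exact: FtoM_surj].
Qed.
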